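(* Let $\rho$ be an $n$-qubit state and $\mathcal S$ a collection of subsets of $[n]$ such that the hypergraph $([n],\mathcal S)$ is connected and $\rho_S$ is a symmetric state on $\mathcal H_S$ for every $S\in\mathcal S$. Then $\rho$ is a symmetric state.
   Context: Let $[n]=\{1,\dots,n\}$, $\mathcal H_{[n]}=(\mathbb C^2)^{\otimes n}$, $\mathcal H_S$ the tensor product of the qubits in $S$, and $\rho_S$ the partial trace of $\rho$ over qubits outside $S$. The symmetric subspace of $\mathcal H_S$ consists of vectors invariant under swapping any two qubits of $S$; a state on $\mathcal H_S$ is symmetric if its range is contained in the symmetric subspace (every single-qubit state is symmetric). The hypergraph $([n],\mathcal S)$ is connected if for every partition of $[n]$ into nonempty sets $X,Y$ some $S\in\mathcal S$ intersects both $X$ and $Y$. *)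

(* Complex scalars: an arbitrary numClosedFieldType C
   (covers the complex numbers). *)
From HB Require Import structures.
From mathcomp Require Import all_boot all_order all_algebra all_fingroup.
Set Implicit Arguments. Unset Strict Implicit. Unset Printing Implicit Defensive.
Import Order.TTheory GRing.Theory Num.Theory.
Local Open Scope ring_scope.

Section Qubits.
Variable C : numClosedFieldType.

Definition basis (Q : finType) := {ffun Q -> bool}.

(* Vectors and operators on H_Q = (C^2)^{⊗ Q}, in the computational basis. *)
Definition vect (Q : finType) := basis Q -> C.
Definition oper (Q : finType) := basis Q -> basis Q -> C.

Definition apply_op (Q : finType) (A : oper Q) (w : vect Q) : vect Q :=
  fun a => \sum_(b : basis Q) A a b * w b.

Definition hermitian (Q : finType) (A : oper Q) : Prop :=
  forall a b : basis Q, A a b = (A b a)^*.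

Definition psd (Q : finType) (A : oper Q) : Prop :=
  hermitian A /\
  forall v : vect Q, 0 <= \sum_(a : basis Q) \sum_(b : basis Q) (v a)^* * A a b * v b.

Definition is_state (Q : finType) (A : oper Q) : Prop :=
  psd A /\ \sum_(a : basis Q) A a a = 1.

Definition swap_basis (Q : finType) (i j : Q) (a : basis Q) : basis Q :=
  [ffun k => a (tperm i j k)].

Definition sym_vect (Q : finType) (v : vect Q) : Prop :=
  forall (i j : Q) (a : basis Q), v (swap_basis i j a) = v a.

Definition symmetric_state (Q : finType) (A : oper Q) : Prop :=
  is_state A /\ forall w : vect Q, sym_vect (apply_op A w).

Definition sub_qubits (n : nat) (S : {set 'I_n}) : finType := {i : 'I_n | i \in S}.

Definition restr (n : nat) (S : {set 'I_n}) (x : basis 'I_n) : basis (sub_qubits S) :=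
  [ffun i : sub_qubits S => x (val i)].

Definition ptrace (n : nat) (S : {set 'I_n}) (rho : oper 'I_n) : oper (sub_qubits S) :=
  fun a b => \sum_(x : basis 'I_n) \sum_(y : basis 'I_n |
     [&& restr S x == a, restr S y == b & [forall k, (k \notin S) ==> (x k == y k)]])
     rho x y.

End Qubits.

Definition hconnected (n : nat) (SS : {set {set 'I_n}}) : Prop :=
  forall X Y : {set 'I_n}, X != set0 -> Y != set0 -> X :&: Y = set0 -> X :|: Y = setT ->
    exists2 S, S \in SS & (S :&: X != set0) && (S :&: Y != set0).

From mathcomp Require Import all_boot all_order all_algebra all_fingroup.
From mathcomp Require Import ring.
Set Implicit Arguments. Unset Strict Implicit. Unset Printing Implicit Defensive.
Import Order.TTheory GRing.Theory Num.Theory.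
Local Open Scope ring_scope.

(* Symmetry of [rho_S] forces the swap of two qubits i, j of S to act trivially
   on the trace: tr (rho P_ij) = tr (rho_S P_ij) = tr rho_S = tr rho.  For a
   positive semidefinite [rho] and an involutive permutation P of the basis this
   equality forces rho P = rho, since the vectors e_x - P e_x have nonnegative
   rho-norms summing to 2 (tr rho - tr (rho P)).  So every transposition inside
   some S of the hypergraph fixes [rho]; these transpositions generate a group,
   and connectivity of the hypergraph makes it contain all transpositions. *)

Section PsdForms.
Variables (C : numClosedFieldType) (Q : finType).
Implicit Types (A : oper C Q) (u v w : vect C Q).

Definition bform A u w : C := \sum_(a : basis Q) (u a)^* * \sum_(b : basis Q) A a b * w b.

Definition bvect (p : basis Q) : vect C Q := fun b => (b == p)%:R.

Lemma qformE A v :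
  \sum_(a : basis Q) \sum_(b : basis Q) (v a)^* * A a b * v b = bform A v v.
Proof.
apply: eq_bigr => a _; rewrite mulr_sumr; apply: eq_bigr => b _; by rewrite mulrA.
Qed.

Lemma sum_mul_bvect (F : basis Q -> C) p : \sum_b F b * bvect p b = F p.
Proof.
rewrite (bigD1 p) //= /bvect eqxx mulr1 big1 ?addr0 // => b /negbTE ->.
exact: mulr0.
Qed.

Lemma sum_conj_bvect_mul (F : basis Q -> C) p : \sum_b (bvect p b)^* * F b = F p.
Proof.
rewrite -[RHS](sum_mul_bvect F p); apply: eq_bigr => b _.
by rewrite /bvect rmorph_nat mulrC.
Qed.

Lemma bformDr A u w1 w2 k :
  bform A u (fun b => w1 b + k * w2 b) = bform A u w1 + k * bform A u w2.
Proof.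
rewrite /bform mulr_sumr -big_split; apply: eq_bigr => a _ /=.
rewrite mulrCA -mulrDr; congr (_ * _).
rewrite mulr_sumr -big_split; apply: eq_bigr => b _ /=; ring.
Qed.

Lemma bformDl A u1 u2 w k :
  bform A (fun b => u1 b + k * u2 b) w = bform A u1 w + k^* * bform A u2 w.
Proof.
rewrite /bform mulr_sumr -big_split; apply: eq_bigr => a _ /=.
rewrite rmorphD rmorphM /=; ring.
Qed.

Lemma bform_bvect A p q : bform A (bvect p) (bvect q) = A p q.
Proof. by rewrite /bform sum_conj_bvect_mul sum_mul_bvect. Qed.

Lemma bform_ge0 A v : psd A -> 0 <= bform A v v.
Proof. by case=> _ pA; rewrite -qformE. Qed.

Lemma psd_kernel A v : psd A -> bform A v v = 0 -> forall a, \sum_b A a b * v b = 0.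
Proof.
move=> psdA qv a0; have hA := psdA.1.
set c := \sum_b A a0 b * v b.
have A00 : 0 <= A a0 a0 by rewrite -bform_bvect bform_ge0.
set m := A a0 a0 + 1.
have mc : m^* = m by apply: geC0_conj; rewrite /m addr_ge0.
have vAe : bform A v (bvect a0) = c^*.
  rewrite /bform /c rmorph_sum; apply: eq_bigr => a _ /=.
  by rewrite sum_mul_bvect rmorphM /= hA mulrC.
have eAv : bform A (bvect a0) v = c by rewrite /bform sum_conj_bvect_mul.
have bformZl w : bform A (fun b => m * v b) w = m^* * bform A v w.
  rewrite /bform mulr_sumr; apply: eq_bigr => a _; rewrite rmorphM /=; ring.
have bformZr w : bform A w (fun b => m * v b) = m * bform A w v.
  rewrite /bform !mulr_sumr; apply: eq_bigr => a _.
  rewrite !mulr_sumr; apply: eq_bigr => b _; ring.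
(* any real m > A a0 a0 / 2 makes the form negative at m v - c e_a0 unless c = 0 *)
pose u b := m * v b + (- c) * bvect a0 b.
have qu : bform A u u = - (c * c^*) * (A a0 a0 + 2).
  rewrite /u bformDl !bformDr !bformZl !bformZr qv vAe eAv bform_bvect mc rmorphN /= /m.
  ring.
have := bform_ge0 u psdA; rewrite qu mulNr oppr_ge0 pmulr_lle0; last first.
  by apply: lt_le_trans (ler_wpDl A00 (lexx 2)); rewrite ltr0n.
rewrite -normCK => c2le0.
have : `|c| ^+ 2 = 0 by apply/eqP; rewrite eq_le c2le0 exprn_ge0.
by move/eqP; rewrite expf_eq0 /= normr_eq0 => /eqP.
Qed.

Lemma psd_col_invariant A (s : basis Q -> basis Q) :
    psd A -> involutive s -> \sum_y A (s y) y = \sum_y A y y ->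
  forall a x, A a (s x) = A a x.
Proof.
move=> psdA sK trs a x.
pose v y b := bvect y b + (-1) * bvect (s y) b.
have qv y : bform A (v y) (v y) = (A y y - A (s y) y) + (A (s y) (s y) - A (s (s y)) (s y)).
  rewrite /v bformDl !bformDr !bform_bvect sK rmorphN rmorph1; ring.
have sum_qv : \sum_y bform A (v y) (v y) = 0.
  rewrite (eq_bigr _ (fun y _ => qv y)) big_split /=.
  have -> : \sum_y (A (s y) (s y) - A (s (s y)) (s y)) = \sum_y (A y y - A (s y) y).
    by rewrite (reindex_inj (inv_inj sK)); apply: eq_bigr => y _; rewrite !sK.
  by rewrite sumrB trs subrr addr0.
have qvx : bform A (v x) (v x) = 0.
  by apply: (psumr_eq0P _ sum_qv) => // y _; rewrite bform_ge0.
have := psd_kernel psdA qvx a.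
under eq_bigr => b _ do rewrite /v mulrDr mulrCA.
rewrite big_split /= -mulr_sumr !sum_mul_bvect mulN1r => /eqP.
by rewrite subr_eq0 => /eqP.
Qed.

End PsdForms.

Definition perm_basis (Q : finType) (s : {perm Q}) (a : basis Q) : basis Q :=
  [ffun k => a (s k)].

Lemma perm_basis1 (Q : finType) (a : basis Q) : perm_basis 1 a = a.
Proof. by apply/ffunP => k; rewrite ffunE perm1. Qed.

Lemma perm_basisM (Q : finType) (s t : {perm Q}) (a : basis Q) :
  perm_basis (s * t) a = perm_basis s (perm_basis t a).
Proof. by apply/ffunP => k; rewrite !ffunE permM. Qed.

Lemma perm_basis_tpermK (Q : finType) (i j : Q) : involutive (perm_basis (tperm i j)).
Proof. by move=> a; rewrite -perm_basisM tperm2 perm_basis1. Qed.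

Section RowStabiliser.
Variables (C : numClosedFieldType) (Q : finType) (A : oper C Q).

Definition row_stab : {set {perm Q}} :=
  [set s | [forall x, forall y, A (perm_basis s x) y == A x y]].

Lemma row_stabP s : reflect (forall x y, A (perm_basis s x) y = A x y) (s \in row_stab).
Proof.
rewrite inE; apply: (iffP forallP) => [sA x y | sA x].
  by move/forallP: (sA x) => /(_ y) /eqP.
by apply/forallP => y; rewrite sA.
Qed.

Lemma group_set_row_stab : group_set row_stab.
Proof.
apply/group_setP; split; first by apply/row_stabP => x y; rewrite perm_basis1.
move=> s t /row_stabP sA /row_stabP tA; apply/row_stabP => x y.
by rewrite perm_basisM sA tA.
Qed.

Canonical row_stab_group := group group_set_row_stab.

End RowStabiliser.

Lemma tperm_connected (n : nat) (G : {group {perm 'I_n}}) (SS : {set {set 'I_n}}) :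
    hconnected SS ->
    (forall S i j, S \in SS -> i \in S -> j \in S -> tperm i j \in G) ->
  forall i j, tperm i j \in G.
Proof.
move=> hc GS i k; pose X := [set j | tperm i j \in G].
have iX : i \in X by rewrite inE tperm1 group1.
apply: contraT => kNX.
have X0 : X != set0 by apply/set0Pn; exists i.
have CX0 : ~: X != set0 by apply/set0Pn; exists k; rewrite !inE.
have [S SS_S] := hc X (~: X) X0 CX0 (setICr X) (setUCr X).
case/andP => /set0Pn [j1 /setIP [j1S]] /[!inE] j1X.
case/set0Pn => j2 /setIP [j2S] /[!inE] j2NX.
(* (i j2) = (j1 j2)^(i j1), and the case j1 = i is covered since (i i) = 1 *)
have : tperm i j2 = (tperm j1 j2 ^ tperm i j1)%g.
  rewrite tpermJ tpermR tpermD //; last by apply: contraNneq j2NX => <-.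
  by apply: contraNneq j2NX => <-; rewrite tperm1 group1.
by move: j2NX => /[swap] ->; rewrite groupJ // (GS S).
Qed.

Section PartialTrace.
Variables (C : numClosedFieldType) (n : nat) (S : {set 'I_n}).
Variables (i j : 'I_n) (iS : i \in S) (jS : j \in S).

Let i' : sub_qubits S := Sub i iS.
Let j' : sub_qubits S := Sub j jS.

Lemma val_tperm_sub k : val (tperm i' j' k) = tperm i j (val k).
Proof.
case: tpermP => [->|->|/eqP ki /eqP kj]; rewrite ?tpermL ?tpermR //.
rewrite tpermD //; [move: ki | move: kj]; by rewrite eq_sym -(inj_eq val_inj).
Qed.

Lemma restr_swap_basis (x y : basis 'I_n) :
  (restr S x == swap_basis i' j' (restr S y)) && [forall k, (k \notin S) ==> (x k == y k)]
  = (x == swap_basis i j y).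
Proof.
have tperm_out k : k \notin S -> tperm i j k = k.
  by move=> kNS; apply: tpermD; apply: contraNneq kNS => <-.
apply/idP/eqP => [/andP [/eqP/ffunP xS /forallP xNS] | ->].
  apply/ffunP => k; rewrite ffunE; case: (boolP (k \in S)) => kS.
    by have := xS (Sub k kS); rewrite !ffunE val_tperm_sub.
  by move: (xNS k); rewrite kS => /eqP ->; rewrite tperm_out.
apply/andP; split; first by apply/eqP/ffunP => k; rewrite !ffunE val_tperm_sub.
by apply/forallP => k; apply/implyP => kNS; rewrite ffunE tperm_out.
Qed.

Lemma ptrace_swap_trace (rho : oper C 'I_n) :
  \sum_a @ptrace C n S rho (swap_basis i' j' a) a = \sum_y rho (swap_basis i j y) y.
Proof.
rewrite /ptrace.
under eq_bigr => a _ do under eq_bigr => x _ do rewrite big_mkcond /=.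
rewrite exchange_big /=; under eq_bigr => x _ do rewrite exchange_big /=.
rewrite exchange_big /=; apply: eq_bigr => y _.
rewrite (eq_bigr (fun x => if x == swap_basis i j y then rho x y else 0)).
  by rewrite -big_mkcond big_pred1_eq.
move=> x _; rewrite (bigD1 (restr S y)) //= eqxx /= -restr_swap_basis.
by rewrite big1 ?addr0 // => a; rewrite eq_sym => /negbTE ->; rewrite andbF.
Qed.

End PartialTrace.

Lemma swap_basis_id (Q : finType) (i : Q) (a : basis Q) : swap_basis i i a = a.
Proof. by rewrite /swap_basis tperm1 -/(perm_basis 1 a) perm_basis1. Qed.

Lemma tperm_row_stab_of_symmetric (C : numClosedFieldType) (n : nat) (rho : oper C 'I_n)
    (S : {set 'I_n}) (i j : 'I_n) :
    psd rho -> symmetric_state (@ptrace C n S rho) -> i \in S -> j \in S ->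
  tperm i j \in row_stab rho.
Proof.
move=> psd_rho [_ symP] iS jS.
pose i' : sub_qubits S := Sub i iS; pose j' : sub_qubits S := Sub j jS.
have P_swap a b : @ptrace C n S rho (swap_basis i' j' a) b = @ptrace C n S rho a b.
  by have := symP (bvect C b) i' j' a; rewrite /apply_op !sum_mul_bvect.
have tr_swap : \sum_y rho (swap_basis i j y) y = \sum_y rho y y.
  rewrite -(ptrace_swap_trace iS jS); under eq_bigr do rewrite P_swap.
  under [RHS]eq_bigr do rewrite -[y in rho y](swap_basis_id i).
  by rewrite -(ptrace_swap_trace iS iS); under [RHS]eq_bigr do rewrite swap_basis_id.
have col_inv := psd_col_invariant psd_rho (perm_basis_tpermK i j) tr_swap.
apply/row_stabP => x y.
by rewrite psd_rho.1 col_inv -psd_rho.1.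
Qed.

Theorem mainTheorem12 (C : numClosedFieldType) (n : nat) (rho : oper C 'I_n)
    (SS : {set {set 'I_n}}) :
  is_state rho -> hconnected SS ->
  (forall S, S \in SS -> symmetric_state (@ptrace C n S rho)) ->
  symmetric_state rho.
Proof.
move=> st hc symSS; split=> // w i j a.
have /row_stabP rho_swap : tperm i j \in row_stab rho.
  apply: tperm_connected hc _ i j => S k l SS_S kS lS.
  exact: tperm_row_stab_of_symmetric st.1 (symSS S SS_S) kS lS.
by apply: eq_bigr => b _; rewrite rho_swap.
Qed.
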